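(* Let $A=\{z\in\mathbb{C}:\operatorname{Re}z>0\}$ and let $P,Q,Q_1$ be polynomials in one complex variable, with $P$ not vanishing on $A$. If $Q(w)+P(w)vQ_1(w)\ne0$ for all $v,w\in A$, then either $S(z)=Q(z)+P(z)Q_1'(z)\ne0$ for all $z\in A$, or $S\equiv0$. *)

(* complex numbers are R[i] (mathcomp-real-closed complex.v)
   over Stdlib's real numbers R (an rcfType via Rstruct), i.e. genuinely C. *)
From HB Require Import structures.
From mathcomp Require Import all_boot all_order all_algebra.
From mathcomp Require Import complex Rstruct.
From Stdlib Require Import Reals.
Set Implicit Arguments. Unset Strict Implicit. Unset Printing Implicit Defensive.
Import Order.TTheory GRing.Theory Num.Theory.

Notation CC := (Rdefinitions.R[i]).

Definition in_A (z : CC) : Prop := (0 < complex.Re z)%R.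

From HB Require Import structures.
From mathcomp Require Import all_boot all_order all_algebra.
From mathcomp Require Import complex Rstruct.
From Stdlib Require Import Reals.
From mathcomp Require Import ring.
Import Order.TTheory GRing.Theory Num.Theory.
Local Open Scope ring_scope.

(* The hypothesis says that -Q(w) / (P(w) Q1(w)) never lies in the half-plane, i.e.
   Re (Q(w) * conj ((P Q1)(w))) >= 0 for Re w > 0.  Near a zero z of a nonzero polynomial
   f = (X - z)^m F, and for q with q(z) <> 0, the product f * conj q behaves like
   (w - z)^m F(z) conj (q(z)) and so takes values of negative real part.  Hence Q1 has no
   zero in the half-plane, and if Q1 is constant then S = Q has none either unless Q = 0.
   If Q1 is not constant, its roots a all satisfy Re a <= 0, so for Re z > 0 the
   logarithmic derivative Q1'/Q1 (z) = sum 1/(z - a) has positive real part; with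
   v := Q1'(z)/Q1(z) the hypothesis gives S(z) = Q(z) + P(z) v Q1(z) <> 0. *)

Section ComplexPolynomials.
Local Set Implicit Arguments.
Local Unset Strict Implicit.
Variable C : numClosedFieldType.

Lemma exists_small_pos (F : numFieldType) (a c K : F) :
  0 < a -> 0 < c -> 0 <= K -> exists d, [/\ 0 < d, d <= 1, d < a & K * d < c].
Proof.
move=> a0 c0 K0; set D := 1 + a^-1 + K / c.
have Kc0 : 0 <= K / c := divr_ge0 K0 (ltW c0).
have aD : a^-1 < D by rewrite /D -addrA addrCA ltrDl (ltr_pwDl ltr01 Kc0).
have KD : K / c < D by rewrite /D ltrDr addr_gt0 // invr_gt0.
have D0 : 0 < D by apply: lt_trans aD; rewrite invr_gt0.
exists D^-1; split; first by rewrite invr_gt0.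
- by rewrite invf_le1 // /D -addrA lerDl addr_ge0 // ltW // invr_gt0.
- by rewrite -[a]invrK ltf_pV2 ?posrE ?invr_gt0.
- by rewrite ltr_pdivrMr // mulrC -ltr_pdivrMr.
Qed.

Implicit Types (f g : C -> C) (z w : C).

Definition lipschitz_at f z : Prop :=
  exists2 M : C, 0 <= M & forall h, `|h| <= 1 -> `|f (z + h) - f z| <= M * `|h|.

Lemma lipschitz_at_cst c z : lipschitz_at (fun=> c) z.
Proof. by exists 0 => // h _; rewrite subrr normr0 mul0r. Qed.

Lemma lipschitz_at_id z : lipschitz_at (fun x => x) z.
Proof. by exists 1 => // h _; rewrite addrC addKr mul1r. Qed.

Lemma lipschitz_at_bounded f z : lipschitz_at f z ->
  exists2 B : C, 0 <= B & forall h, `|h| <= 1 -> `|f (z + h)| <= B.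
Proof.
case=> M M0 HM; exists (`|f z| + M) => [|h h1]; first by rewrite addr_ge0.
rewrite -[f (z + h)](subrK (f z)) addrC; apply: le_trans (ler_normD _ _) _.
by rewrite lerD2l (le_trans (HM h h1)) // ler_piMr.
Qed.

Lemma lipschitz_atD f g z : lipschitz_at f z -> lipschitz_at g z ->
  lipschitz_at (fun x => f x + g x) z.
Proof.
move=> [Mf Mf0 Hf] [Mg Mg0 Hg]; exists (Mf + Mg) => [|h h1]; first exact: addr_ge0.
rewrite (_ : _ - _ = (f (z + h) - f z) + (g (z + h) - g z)); last by ring.
by rewrite mulrDl (le_trans (ler_normD _ _)) // lerD ?Hf ?Hg.
Qed.

Lemma lipschitz_atM f g z : lipschitz_at f z -> lipschitz_at g z ->
  lipschitz_at (fun x => f x * g x) z.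
Proof.
move=> [Mf Mf0 Hf] Lg; have [Bg Bg0 HBg] := lipschitz_at_bounded Lg.
case: Lg => Mg Mg0 Hg; exists (Mf * Bg + `|f z| * Mg) => [|h h1].
  by rewrite addr_ge0 ?mulr_ge0.
rewrite (_ : _ - _ = (f (z + h) - f z) * g (z + h) + f z * (g (z + h) - g z));
  last by ring.
apply: le_trans (ler_normD _ _) _; rewrite !normrM mulrDl.
apply: lerD; first by rewrite mulrAC ler_pM ?Hf ?HBg.
by rewrite -mulrA ler_pM ?Hg.
Qed.

Lemma lipschitz_at_conj f z : lipschitz_at f z -> lipschitz_at (fun x => (f x)^*) z.
Proof. by case=> M M0 HM; exists M => // h h1; rewrite -rmorphB norm_conjC HM. Qed.

Lemma lipschitz_at_horner (p : {poly C}) z : lipschitz_at (horner p) z.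
Proof.
elim/poly_ind: p => [|p c IHp].
  by exists 0 => // h _; rewrite !horner0 subrr normr0 mul0r.
have [M M0 HM] := lipschitz_atD (lipschitz_atM IHp (lipschitz_at_id z))
                                (lipschitz_at_cst c z).
by exists M => // h; rewrite !hornerE; apply: HM.
Qed.

Lemma exists_near_Re_exprB_mul_lt0 g z (m : nat) (r : C) :
  lipschitz_at g z -> g z != 0 -> (0 < m)%nat -> 0 < r ->
  exists2 w, `|w - z| < r & 'Re ((w - z) ^+ m * g w) < 0.
Proof.
move=> [K K0 HK] gz0 m0 r0; set b := g z.
have b0 : 0 < `|b| by rewrite normr_gt0.
(* [u ^+ m * b = - `|b| ^+ 2]: along the ray [z + t u] the leading term is negative. *)
set u := m.-root (- b^*).
have um : u ^+ m = - b^* by rewrite rootCK.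
have u0 : 0 < `|u| by rewrite normr_gt0 rootC_eq0 // oppr_eq0 conjC_eq0.
have [d [d0 d1 dr Kd]] := exists_small_pos r0 b0 K0.
set t := d / `|u|.
have t0 : 0 < t by rewrite divr_gt0.
have tu : `|t * u| = d by rewrite normrM gtr0_norm // divfK // gt_eqF.
exists (z + t * u); first by rewrite addrAC subrr add0r tu.
set E := g (z + t * u) - b.
have HE : `|E| <= K * d by rewrite -tu HK // tu.
have -> : (z + t * u - z) ^+ m * g (z + t * u) = - t ^+ m * (b^* * b + b^* * E).
  by rewrite /E addrAC subrr add0r exprMn um; ring.
rewrite ReMl ?rpredN ?rpredX ?gtr0_real // mulNr oppr_lt0 pmulr_rgt0 ?exprn_gt0 //.
have ReE : - 'Re (b^* * E) <= `|b| * (K * d).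
  rewrite -raddfN (le_trans (leif_Re_Creal _).1) // normrN normrM norm_conjC.
  by rewrite ler_wpM2l.
rewrite -normCKC raddfD /= (Creal_ReP _ _) ?realX ?normr_real //.
by rewrite -[X in _ + X]opprK subr_gt0 (le_lt_trans ReE) // expr2 ltr_pM2l.
Qed.

Lemma Re_gt0_near z w : `|w - z| < 'Re z -> 0 < 'Re w.
Proof.
move=> wz; have -> : 'Re w = 'Re z - 'Re (z - w) by rewrite raddfB /= opprB addrC subrK.
by rewrite subr_gt0 (le_lt_trans _ wz) // distrC (leif_Re_Creal _).1.
Qed.

Lemma exists_near_root_Re_mul_conj_lt0 (f q : {poly C}) z (r : C) :
  0 < r -> f != 0 -> root f z -> q.[z] != 0 ->
  exists2 w, `|w - z| < r & 'Re (f.[w] * q.[w]^*) < 0.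
Proof.
move=> r0 f0 fz qz; have [m [F /implyP/(_ f0) Fz Df]] := multiplicity_XsubC f z.
have m0 : (0 < m)%nat.
  by case: m Df => // Df; move: fz; rewrite Df expr0 mulr1 (negbTE Fz).
have Lg := lipschitz_atM (lipschitz_at_horner F z)
                         (lipschitz_at_conj (lipschitz_at_horner q z)).
have Fqz : F.[z] * q.[z]^* != 0 by rewrite mulf_neq0 ?conjC_eq0.
have [w wz Hw] := exists_near_Re_exprB_mul_lt0 Lg Fqz m0 r0.
exists w => //; rewrite Df hornerM horner_exp hornerXsubC.
by rewrite -mulrA mulrCA.
Qed.

Lemma horner_prod_XsubC (s : seq C) w :
  (\prod_(a <- s) ('X - a%:P)).[w] = \prod_(a <- s) (w - a).
Proof. by rewrite horner_prod; apply: eq_bigr => a _; rewrite hornerXsubC. Qed.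

Lemma logderiv_prod_XsubC (s : seq C) w : (forall a, a \in s -> w != a) ->
  (\prod_(a <- s) ('X - a%:P))^`().[w] / (\prod_(a <- s) ('X - a%:P)).[w]
    = \sum_(a <- s) (w - a)^-1.
Proof.
elim: s => [|a s IHs] ws; first by rewrite !big_nil derivC horner0 mul0r.
have wa : w - a != 0 by rewrite subr_eq0 ws ?mem_head.
have ps : (\prod_(b <- s) ('X - b%:P)).[w] != 0.
  rewrite horner_prod_XsubC prodf_seq_neq0; apply/allP => b bs.
  by rewrite subr_eq0 ws // inE bs orbT.
rewrite big_cons derivM derivXsubC mul1r !hornerE big_cons -IHs; last first.
  by move=> b bs; rewrite ws // inE bs orbT.
by field; rewrite wa ps.
Qed.

Lemma Re_logderiv_gt0 (p : {poly C}) z : (1 < size p)%nat ->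
  (forall a, root p a -> 'Re a < 'Re z) -> 0 < 'Re (p^`().[z] / p.[z]).
Proof.
move=> sp rootsp; have [rs Dp] := closed_field_poly_normal p.
have p0 : p != 0 by rewrite -size_poly_gt0 (ltn_trans _ sp).
have lc0 : lead_coef p != 0 by rewrite lead_coef_eq0.
have Re_rs : forall a, a \in rs -> 'Re a < 'Re z.
  by move=> a ars; apply: rootsp; rewrite Dp rootZ // root_prod_XsubC.
have za : forall a, a \in rs -> z != a.
  by move=> a /Re_rs; apply: contraTneq => ->; rewrite ltxx.
rewrite Dp derivZ !hornerZ invfM mulrACA divff // mul1r.
rewrite logderiv_prod_XsubC // raddf_sum.
case: rs Dp Re_rs {za} => [|a rs] Dp Re_rs.
  by move: sp; rewrite Dp big_nil size_scale // size_poly1.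
have Re_inv_gt0 : forall b, b \in a :: rs -> 0 < 'Re ((z - b)^-1).
  move=> b /Re_rs zb; rewrite ReV divr_gt0 ?exprn_gt0 ?normr_gt0 //.
    by rewrite raddfB subr_gt0.
  by rewrite subr_eq0; apply: contraTneq zb => ->; rewrite ltxx.
rewrite big_cons ltr_pwDl ?Re_inv_gt0 ?mem_head // big_seq sumr_ge0 // => b brs.
by rewrite ltW // Re_inv_gt0 // inE brs orbT.
Qed.

Section HalfPlane.
Variables P Q Q1 : {poly C}.
Hypothesis P_neq0 : forall z, 0 < 'Re z -> P.[z] != 0.
Hypothesis Q_add_PvQ1_neq0 :
  forall v w, 0 < 'Re v -> 0 < 'Re w -> Q.[w] + P.[w] * v * Q1.[w] != 0.

Lemma Q_neq0_at_root_Q1 w : 0 < 'Re w -> Q1.[w] = 0 -> Q.[w] != 0.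
Proof.
move=> Rw Q1w; have := Q_add_PvQ1_neq0 (v := 1) _ Rw.
by rewrite Q1w mulr0 addr0; apply; rewrite (Creal_ReP _ _) ?real1 // ltr01.
Qed.

Lemma Re_mul_conj_PQ1_ge0 w : 0 < 'Re w -> 0 <= 'Re (Q.[w] * (P * Q1).[w]^*).
Proof.
move=> Rw; set x := Q.[w]; set y := (P * Q1).[w].
rewrite real_leNgt ?real0 ?Creal_Re //; apply/negP => Rxy.
have y0 : y != 0 by apply: contraTneq Rxy => ->; rewrite conjC0 mulr0 raddf0 ltxx.
have Rv : 0 < 'Re (- x / y).
  rewrite invC_norm mulrCA mulNr mulrN raddfN /= ReMl ?realV ?realX ?normr_real //.
  by rewrite oppr_gt0 pmulr_rlt0 // invr_gt0 exprn_gt0 // normr_gt0.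
have /eqP[] := Q_add_PvQ1_neq0 Rv Rw.
by rewrite mulrAC -hornerM -/y mulrC divfK // addrN.
Qed.

Lemma Q1_neq0_in_half_plane : Q1 != 0 -> forall w, 0 < 'Re w -> Q1.[w] != 0.
Proof.
move=> Q10 w Rw; apply/eqP => Q1w.
have P0 : P != 0 by apply: contraTneq (P_neq0 Rw) => ->; rewrite horner0 eqxx.
have PQ1w : root (P * Q1) w by rewrite rootE hornerM Q1w mulr0.
have [w' w'w Rneg] := exists_near_root_Re_mul_conj_lt0 Rw (mulf_neq0 P0 Q10)
                        PQ1w (Q_neq0_at_root_Q1 Rw Q1w).
have := Re_mul_conj_PQ1_ge0 (Re_gt0_near w'w).
by rewrite -Re_conj rmorphM /= conjCK mulrC (lt_geF Rneg).
Qed.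

Lemma Q_root_free_or_0_of_Q1_const c : Q1 = c%:P ->
  (forall z, 0 < 'Re z -> Q.[z] != 0) \/ Q = 0.
Proof.
move=> DQ1; have [c0|c0] := eqVneq c 0.
  by left=> z Rz; apply: Q_neq0_at_root_Q1; rewrite // DQ1 c0 hornerC.
have [->|Q0] := eqVneq Q 0; [by right | left=> z Rz; apply/eqP => Qz].
have PQ1z : (P * Q1).[z] != 0 by rewrite hornerM DQ1 hornerC mulf_neq0 ?P_neq0.
have [w wz Rneg] := exists_near_root_Re_mul_conj_lt0 Rz Q0 (introT eqP Qz) PQ1z.
by have := Re_mul_conj_PQ1_ge0 (Re_gt0_near wz); rewrite (lt_geF Rneg).
Qed.

Lemma Q_add_P_derivQ1_neq0 : (1 < size Q1)%nat ->
  forall z, 0 < 'Re z -> (Q + P * Q1^`()).[z] != 0.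
Proof.
move=> sQ1 z Rz; have Q10 : Q1 != 0 by rewrite -size_poly_gt0 (ltn_trans _ sQ1).
have Q1z := Q1_neq0_in_half_plane Q10 Rz.
have Rv : 0 < 'Re (Q1^`().[z] / Q1.[z]).
  apply: Re_logderiv_gt0 => // a Q1a; apply: le_lt_trans Rz.
  rewrite real_leNgt ?real0 ?Creal_Re //; apply: contraL Q1a.
  exact: Q1_neq0_in_half_plane.
by have := Q_add_PvQ1_neq0 Rv Rz; rewrite -mulrA divfK // -hornerM -hornerD.
Qed.

Lemma Q_add_P_derivQ1_root_free_or_0 :
  (forall z, 0 < 'Re z -> (Q + P * Q1^`()).[z] != 0) \/ Q + P * Q1^`() = 0.
Proof.
have [/size1_polyC DQ1|sQ1] := leqP (size Q1) 1; last first.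
  by left; apply: Q_add_P_derivQ1_neq0.
rewrite DQ1 derivC mulr0 addr0; exact: Q_root_free_or_0_of_Q1_const DQ1.
Qed.

End HalfPlane.

End ComplexPolynomials.

Lemma in_AE (z : CC) : in_A z <-> 0 < 'Re z.
Proof.
rewrite /in_A -complexRe -[0 : CC]/((0 : Rdefinitions.R)%:C)%C ltcR.
by split => /RltP.
Qed.

Theorem lemma2p3 (P Q Q1 : {poly CC}) :
  (forall z : CC, in_A z -> P.[z] != 0) ->
  (forall v w : CC, in_A v -> in_A w -> Q.[w] + P.[w] * v * Q1.[w] != 0) ->
  (forall z : CC, in_A z -> (Q + P * Q1^`()).[z] != 0) \/ Q + P * Q1^`() = 0.
Proof.
move=> HP HQ.
have [S_neq0|->] := Q_add_P_derivQ1_root_free_or_0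
  (fun z Rz => HP z (proj2 (in_AE z) Rz))
  (fun v w Rv Rw => HQ v w (proj2 (in_AE v) Rv) (proj2 (in_AE w) Rw)).
  by left=> z /in_AE; apply: S_neq0.
by right.
Qed.
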